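(* Let $\mu$ be a probability distribution on $Q_d$ such that $\mu(X)\ge\mu(Y)$ whenever $X\subseteq Y$. Then $(\mathbf 0,\mathbf 0)$ is an equilibrium. Similarly, if $\mu(X)\le\mu(Y)$ whenever $X\subseteq Y$, then $(\mathbf 1,\mathbf 1)$ is an equilibrium.
   Context: $Q_d=\{0,1\}^d$ with the Hamming distance $d(X,Y)=|\{i: x_i\neq y_i\}|$; for $X,Y\in Q_d$, $X\subseteq Y$ means $x_i\le y_i$ for all $i$. A probability distribution on $Q_d$ is a function $\mu:Q_d\to\mathbb R_{\ge0}$ with $\sum_{V\in Q_d}\mu(V)=1$, extended to subsets by $\mu(\mathcal A)=\sum_{V\in\mathcal A}\mu(V)$. For $A,B\in Q_d$ let $V(A,B)=\{X\in Q_d: d(X,A)<d(X,B)\}$ and $T(A,B)=\{X\in Q_d: d(X,A)=d(X,B)\}$. Payoffs: $P_1(A,B)=\mu(V(A,B))+\frac12\mu(T(A,B))$, $P_2(A,B)=\mu(V(B,A))+\frac12\mu(T(A,B))$. $(A,B)$ is an equilibrium if $P_1(A,B)\ge P_1(A',B)$ for all $A'$ and $P_2(A,B)\ge P_2(A,B')$ for all $B'$. $\mathbf 0=(0,\dots,0)$, $\mathbf 1=(1,\dots,1)$. *)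

From mathcomp Require Import all_boot all_order all_algebra.
Set Implicit Arguments. Unset Strict Implicit. Unset Printing Implicit Defensive.
Import Order.TTheory GRing.Theory Num.Theory.
Local Open Scope ring_scope.

Definition cube (d : nat) := {ffun 'I_d -> bool}.

Definition hamming (d : nat) (X Y : cube d) : nat := #|[set i | X i != Y i]|.

Definition subcube (d : nat) (X Y : cube d) : bool := [forall i, X i ==> Y i].

Definition is_distribution (R : realFieldType) (d : nat) (mu : cube d -> R) : Prop :=
  (forall V, 0 <= mu V) /\ \sum_(V : cube d) mu V = 1.

Definition muV (R : realFieldType) (d : nat) (mu : cube d -> R) (A B : cube d) : R :=
  \sum_(X : cube d | (hamming X A < hamming X B)%N) mu X.
Definition muT (R : realFieldType) (d : nat) (mu : cube d -> R) (A B : cube d) : R :=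
  \sum_(X : cube d | hamming X A == hamming X B) mu X.

Definition P1 (R : realFieldType) (d : nat) (mu : cube d -> R) (A B : cube d) : R :=
  muV mu A B + muT mu A B / 2.
Definition P2 (R : realFieldType) (d : nat) (mu : cube d -> R) (A B : cube d) : R :=
  muV mu B A + muT mu A B / 2.

Definition equilibrium (R : realFieldType) (d : nat) (mu : cube d -> R) (A B : cube d) : Prop :=
  (forall A', P1 mu A' B <= P1 mu A B) /\ (forall B', P2 mu A B' <= P2 mu A B).

Definition cube0 (d : nat) : cube d := [ffun _ => false].
Definition cube1 (d : nat) : cube d := [ffun _ => true].

From mathcomp Require Import all_boot all_order all_algebra.
From mathcomp Require Import zify lra.
Set Implicit Arguments. Unset Strict Implicit. Unset Printing Implicit Defensive.
Import Order.TTheory GRing.Theory Num.Theory.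
Local Open Scope ring_scope.

(* With |A ∩ X| the number of common ones, d(X, A) - d(X, 0) = |A| - 2|A ∩ X|: X is
   strictly closer to A than to 0 iff |A ∩ X| > |A|/2, and strictly closer to 0 iff
   |A ∩ X| < |A|/2.  For μ antitone under inclusion, the mass of {X : |A ∩ X| >= k} is
   at most the mass of {X : |A ∩ X| < m} whenever k + m = |A| + 1.  This goes by
   induction on |A|: split the cube along a coordinate i of A into the faces X_i = 0
   and X_i = 1, apply the induction hypothesis on each face, and use that μ on the
   face X_i = 1 is dominated by μ on the face X_i = 0.  So no deviation from 0 gains
   against 0; complementing every coordinate turns the increasing case into the
   decreasing one. *)

Lemma card_set_sum (d : nat) (P : pred 'I_d) : #|[set i | P i]| = (\sum_i P i)%N.
Proof. by rewrite -sum1dep_card big_mkcond; apply: eq_bigr => i _; case: (P i). Qed.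

Section CubeCombinatorics.

Variable d : nat.
Implicit Types (X Y A : cube d) (i : 'I_d) (b c : bool).

Definition cube_upd X i b : cube d := [ffun t => if t == i then b else X t].
Definition cube_compl X : cube d := [ffun t => ~~ X t].

Definition overlap A X : nat := (\sum_i (A i && X i))%N.
Definition weight A : nat := overlap A (cube1 d).

Lemma overlap_le_weight A X : (overlap A X <= weight A)%N.
Proof. by apply: leq_sum => i _; rewrite ffunE andbT; case: (A i) (X i) => [] []. Qed.

Lemma hamming_overlap X A :
  (hamming X A + 2 * overlap A X = hamming X (cube0 d) + weight A)%N.
Proof.
rewrite /hamming /weight /overlap !card_set_sum big_distrr -!big_split /=.
by apply: eq_bigr => i _; rewrite !ffunE; case: (X i) (A i) => [] [].
Qed.

Lemma cube_upd_id X i : cube_upd X i (X i) = X.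
Proof. by apply/ffunP => t; rewrite ffunE; case: eqP => [->|]. Qed.

Lemma cube_upd_upd X i b c : cube_upd (cube_upd X i b) i c = cube_upd X i c.
Proof. by apply/ffunP => t; rewrite !ffunE; case: eqP. Qed.

Lemma overlap_upd A X i b :
  overlap A (cube_upd X i b) = (overlap (cube_upd A i false) X + (A i && b))%N.
Proof.
rewrite /overlap /cube_upd [LHS](bigD1 i) //= [in RHS](bigD1 i) //= !ffunE eqxx /= addnC.
congr (_ + _)%N.
by apply: eq_bigr => t /negbTE ti; rewrite !ffunE ti.
Qed.

Lemma weight_upd A i : weight A = (weight (cube_upd A i false) + A i)%N.
Proof. by rewrite /weight -{1}(cube_upd_id (cube1 d) i) overlap_upd ffunE andbT. Qed.

Lemma subcube_refl X : subcube X X.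
Proof. by apply/forallP => i; exact: implybb. Qed.

Lemma subcube_upd X Y i b c :
  subcube X Y -> b ==> c -> subcube (cube_upd X i b) (cube_upd Y i c).
Proof. by move=> /forallP XY bc; apply/forallP => t; rewrite !ffunE; case: eqP. Qed.

Lemma cube_complK : involutive cube_compl.
Proof. by move=> X; apply/ffunP => i; rewrite !ffunE negbK. Qed.

Lemma cube_compl1 : cube_compl (cube1 d) = cube0 d.
Proof. by apply/ffunP => i; rewrite !ffunE. Qed.

Lemma hamming_compl X A : hamming (cube_compl X) A = hamming X (cube_compl A).
Proof.
rewrite /hamming !card_set_sum; apply: eq_bigr => i _.
by rewrite !ffunE; case: (X i) (A i) => [] [].
Qed.

Lemma subcube_compl X Y : subcube X Y -> subcube (cube_compl Y) (cube_compl X).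
Proof.
by move=> /forallP XY; apply/forallP => i; rewrite !ffunE; case: (X i) (Y i) (XY i) => [] [].
Qed.

End CubeCombinatorics.

Section CubeSums.

Variables (R : realFieldType) (d : nat).
Implicit Types (f h : cube d -> R) (X Y A B : cube d) (i : 'I_d).

Definition antitone f := forall X Y, subcube X Y -> f Y <= f X.

Definition overlap_sum f A (P : pred nat) := \sum_(X | P (overlap A X)) f X.

(* Each point is counted once on each face X_i = 0 and X_i = 1, via the flip of coordinate i. *)
Lemma sum_cube_faces h i :
  2 * \sum_X h X = \sum_X (h (cube_upd X i false) + h (cube_upd X i true)).
Proof.
pose flip X := cube_upd X i (~~ X i).
have flipK : involutive flip.
  by move=> X; rewrite /flip cube_upd_upd ffunE eqxx negbK cube_upd_id.
rewrite mulr2n mulrDl mul1r {2}(reindex_inj (inv_inj flipK)) -big_split /=.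
apply: eq_bigr => X _; rewrite /flip.
by case: (X i) (cube_upd_id X i) => -> /=; rewrite // addrC.
Qed.

Lemma overlap_sum_faces f A i P : A i ->
  2 * overlap_sum f A P =
    overlap_sum (fun X => f (cube_upd X i false)) (cube_upd A i false) P +
    overlap_sum (fun X => f (cube_upd X i true)) (cube_upd A i false) (P \o succn).
Proof.
move=> Ai; rewrite /overlap_sum !(big_mkcond (fun X => P _)) (sum_cube_faces _ i).
rewrite -big_split; apply: eq_bigr => X _.
by rewrite !overlap_upd Ai addn0 addn1.
Qed.

Lemma overlap_sum_ltS f A m :
  overlap_sum f A (fun c => c < m.+1)%N =
    overlap_sum f A (fun c => c < m)%N + overlap_sum f A (pred1 m).
Proof.
rewrite /overlap_sum big_mkcond [in RHS]big_mkcond [X in _ + X]big_mkcond -big_split.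
apply: eq_bigr => X _ /=; rewrite ltnS leq_eqVlt.
by case: ltngtP; rewrite ?addr0 ?add0r.
Qed.

Lemma antitone_face f i b : antitone f -> antitone (fun X => f (cube_upd X i b)).
Proof. by move=> fA X Y XY; apply: fA; apply: subcube_upd; rewrite ?implybb. Qed.

Lemma antitone_faces_le f i X :
  antitone f -> f (cube_upd X i true) <= f (cube_upd X i false).
Proof. by move=> fA; apply: fA; exact: subcube_upd (subcube_refl X) _. Qed.

Lemma overlap_sum_degenerate m f A k :
  (k + m = (weight A).+1)%N -> (k == 0)%N || (m == 0)%N ->
  overlap_sum f A (leq k) = overlap_sum f A (fun c => c < m)%N.
Proof. by move=> km km0; apply: eq_bigl => X; have := overlap_le_weight A X; lia. Qed.

Lemma upper_overlap_le_lower n : forall f A k m,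
  antitone f -> weight A = n -> (k + m = n.+1)%N ->
  overlap_sum f A (leq k) <= overlap_sum f A (fun c => c < m)%N.
Proof.
elim: n => [|n IHn] f A k m fA wA km.
  by rewrite (@overlap_sum_degenerate m) ?wA //; lia.
case: k km => [|k] km; first by rewrite (@overlap_sum_degenerate m) ?wA.
case: m km => [|m] km; first by rewrite (@overlap_sum_degenerate 0) ?wA ?orbT.
have [i Ai] : exists i, A i.
  apply/existsP; apply: contraT => /existsPn A0; move: wA.
  by rewrite /weight /overlap big1 // => t _; rewrite (negbTE (A0 t)).
have wA0 : weight (cube_upd A i false) = n.
  by move: wA; rewrite (weight_upd A i) Ai addn1 => -[].
rewrite -(ler_pM2l (ltr0Sn R 1)) !(overlap_sum_faces _ _ Ai).
have f0A := antitone_face i false fA; have f1A := antitone_face i true fA.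
apply: le_trans (lerD (IHn _ _ _ m f0A wA0 _) (IHn _ _ _ m.+1 f1A wA0 _)) _; try lia.
rewrite !overlap_sum_ltS -addrA lerD2l [leLHS]addrC lerD2r.
by apply: ler_sum => X _; apply: antitone_faces_le.
Qed.

Lemma muV_to_cube0_le f A : antitone f -> muV f A (cube0 d) <= muV f (cube0 d) A.
Proof.
move=> fA.
have -> : muV f A (cube0 d) = overlap_sum f A (leq (weight A %/ 2).+1).
  by apply: eq_bigl => X; have := hamming_overlap X A; lia.
have -> : muV f (cube0 d) A = overlap_sum f A (fun c => c < (weight A).+1 %/ 2)%N.
  by apply: eq_bigl => X; have := hamming_overlap X A; lia.
by apply: upper_overlap_le_lower fA erefl _; lia.
Qed.

Lemma muV_muV_muT f A B : muV f A B + muV f B A + muT f A B = \sum_X f X.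
Proof.
rewrite /muV /muT [X in X + _ + _]big_mkcond [X in _ + X + _]big_mkcond.
rewrite [X in _ + X = _]big_mkcond -!big_split /=.
by apply: eq_bigr => X _; case: ltngtP; rewrite ?addr0 ?add0r.
Qed.

Lemma equilibrium_cube0 f : antitone f -> equilibrium f (cube0 d) (cube0 d).
Proof.
move=> fA; have muV00 : muV f (cube0 d) (cube0 d) = 0.
  by rewrite /muV big_pred0 // => X; rewrite ltnn.
have muT00 : muT f (cube0 d) (cube0 d) = \sum_X f X.
  by apply: eq_bigl => X; rewrite eqxx.
have muT_sym A : muT f A (cube0 d) = muT f (cube0 d) A.
  by apply: eq_bigl => X; rewrite eq_sym.
split=> A; rewrite /P1 /P2 muV00 muT00 ?muT_sym;
  have := muV_muV_muT f (cube0 d) A; have := muV_to_cube0_le A fA; lra.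
Qed.

Lemma muV_compl f A B :
  muV f A B = muV (f \o @cube_compl d) (cube_compl A) (cube_compl B).
Proof.
rewrite /muV (reindex_inj (inv_inj (@cube_complK d))).
by apply: eq_bigl => X; rewrite !hamming_compl.
Qed.

Lemma muT_compl f A B :
  muT f A B = muT (f \o @cube_compl d) (cube_compl A) (cube_compl B).
Proof.
rewrite /muT (reindex_inj (inv_inj (@cube_complK d))).
by apply: eq_bigl => X; rewrite !hamming_compl.
Qed.

Lemma equilibrium_compl f A B :
  equilibrium (f \o @cube_compl d) (cube_compl A) (cube_compl B) -> equilibrium f A B.
Proof.
by case=> E1 E2; split=> C; rewrite /P1 /P2 !(muV_compl f) !(muT_compl f); [exact: E1 | exact: E2].
Qed.

End CubeSums.

Theorem mainTheorem7 (R : realFieldType) (d : nat) (mu : cube d -> R) :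
  is_distribution mu ->
  ((forall X Y : cube d, subcube X Y -> mu Y <= mu X) ->
     equilibrium mu (cube0 d) (cube0 d)) /\
  ((forall X Y : cube d, subcube X Y -> mu X <= mu Y) ->
     equilibrium mu (cube1 d) (cube1 d)).
Proof.
move=> _; split; first exact: equilibrium_cube0.
move=> mu_incr; apply: equilibrium_compl; rewrite cube_compl1.
by apply: equilibrium_cube0 => X Y XY; apply: mu_incr; apply: subcube_compl.
Qed.
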